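(* Let $p,w,v$ be positive integers with $1\le v\le w$, let $\mathbf{A}$ be a $p\times p$ matrix and $\mathbf{B}$ a $w\times p$ matrix over $\mathbb{F}_2$, and let $\mathbf{x}_0\in\mathbb{F}_2^p$ be a nonzero initial state. Define $\mathbf{x}_i=\mathbf{A}\mathbf{x}_{i-1}$ and $\mathbf{y}_i=\mathbf{B}\mathbf{x}_i={}^t(y_{i,0},\dots,y_{i,w-1})$ for $i\ge 0$. Assume the characteristic polynomial $P(z)=\det(\mathbf{I}z-\mathbf{A})$ is irreducible over $\mathbb{F}_2$ (e.g. primitive), and that $h_0(z)\neq 0$ (notation as in the context). Let $k\ge 1$ and $w_{j,l-1}\in\mathbb{F}_2$ for $0\le j\le k-1$, $1\le l\le v$, and put $w_{l-1}(z):=\sum_{j=0}^{k-1}w_{j,l-1}z^j\in\mathbb{F}_2[z]$. Then $$\sum_{l=1}^{v}\sum_{j=0}^{k-1} w_{j,l-1}\,y_{i+j,l-1}=0\quad\text{for all } i\ge 0$$ holds if and only if ${}^t(w_0(z),\dots,w_{v-1}(z))\in\mathcal{L}_v^*$.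
   Context: For $1\le l\le w$ define the formal power series $G_{l-1}(z):=\sum_{i=0}^\infty y_{i,l-1}z^{-i-1}\in\mathbb{F}_2((z^{-1}))$. Each has the rational form $G_{l-1}(z)=h_{l-1}(z)/P(z)$ with $h_{l-1}(z)\in\mathbb{F}_2[z]$, $\deg h_{l-1}<\deg P$. Assuming $P$ irreducible and $h_0\neq 0$, let $h_0^{-1}(z)$ denote a polynomial inverse of $h_0(z)$ modulo $P(z)$ and set $\bar h_{l-1}(z):=h_0^{-1}(z)h_{l-1}(z)\bmod P(z)$ for $2\le l\le v$. The Couture–L'Ecuyer dual lattice is the $\mathbb{F}_2[z]$-submodule $\mathcal{L}_v^*\subset\mathbb{F}_2[z]^v$ spanned over $\mathbb{F}_2[z]$ by $\mathbf{w}_1(z)={}^t(P(z),0,\dots,0)$ and $\mathbf{w}_{l}(z)={}^t(-\bar h_{l-1}(z),0,\dots,0,1,0,\dots,0)$ for $2\le l\le v$, where the entry $1$ is in coordinate $l$ (signs are irrelevant over $\mathbb{F}_2$). *)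

From HB Require Import structures.
From mathcomp Require Import all_boot all_order all_algebra.
Set Implicit Arguments. Unset Strict Implicit. Unset Printing Implicit Defensive.
Import GRing.Theory.
Local Open Scope ring_scope.

Definition yout (F : fieldType) (p w : nat) (A : 'M[F]_p) (B : 'M[F]_(w, p))
  (x0 : 'cV[F]_p) (i : nat) (l : 'I_w) : F :=
  (B *m (A ^+ i *m x0)) l 0.

(* The formal Laurent series G(z) = sum_{i>=0} y_i z^{-i-1} has the rational
   form h(z)/P(z) with deg h < deg P, i.e. P(z) G(z) = h(z) in F((z^{-1})),
   compared coefficientwise:
   - coefficient of z^{-n-1} (n >= 0) of P*G is sum_k P_k y_{k+n}, must be 0;
   - coefficient of z^m (m >= 0) of P*G is sum_{k>m} P_k y_{k-m-1}, must be h_m. *)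
Definition rational_form (F : fieldType) (y : nat -> F) (h P : {poly F}) : Prop :=
  [/\ (size h < size P)%N,
      (forall n : nat, \sum_(k < size P) P`_k * y (k + n)%N = 0) &
      (forall m : nat, \sum_(k < size P | (m < k)%N) P`_k * y (k - m - 1)%N = h`_m)].

(* Generators of the Couture--L'Ecuyer dual lattice L_v^* (0-based coordinates):
   generator 0 is (P, 0, ..., 0); generator l >= 1 is
   (-hbar l, 0, ..., 1 (at coordinate l), ..., 0). *)
Definition dual_gen (F : fieldType) (v : nat) (P : {poly F}) (hbar : 'I_v -> {poly F})
  (l j : 'I_v) : {poly F} :=
  if (val l == 0)%N then (if (val j == 0)%N then P else 0)
  else if (val j == 0)%N then - hbar l
  else if j == l then 1 else 0.

Definition in_dual_lattice (F : fieldType) (v : nat) (P : {poly F})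
  (hbar : 'I_v -> {poly F}) (W : 'I_v -> {poly F}) : Prop :=
  exists c : 'I_v -> {poly F},
    forall j : 'I_v, W j = \sum_(l < v) c l * dual_gen P hbar l j.

(* For a polynomial P and a sequence y satisfying the linear recurrence with
   characteristic polynomial P, the numerator N(y) is the polynomial part of
   P(z) G_y(z), where G_y(z) = sum_i y_i z^{-i-1}; its coefficients are
   N(y)_m = sum_{k>m} P_k y_{k-m-1}, so size N(y) < size P.  We prove:
   - N is linear, and recurrent sequences are closed under sums, scalings
     and shifts;
   - shifting y by j multiplies N(y) by z^j modulo P;
   - for monic P, N is injective on recurrent sequences, and P | N(y)
     forces N(y) = 0.
   Hence the relation u_i = sum_l sum_j w_{j,l} y_{i+j,l} vanishes for all i
   iff N(u) = 0 iff P | sum_l w_l(z) h_l(z).  Finally, since h_0^{-1} h_0 = 1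
   modulo P, the vector (w_l)_l lies in L_v^* iff P | sum_l w_l h_l.
   The proposition combines these two equivalences; irreducibility of P only
   serves to provide the inverse h_0^{-1}, which is given as a hypothesis. *)

From HB Require Import structures.
From mathcomp Require Import all_boot all_order all_algebra zify ring.
Set Implicit Arguments. Unset Strict Implicit. Unset Printing Implicit Defensive.
Import GRing.Theory.
Local Open Scope ring_scope.

Lemma dvdp_bigsum (F : fieldType) (I : Type) (r : seq I) (Q : pred I)
    (f : I -> {poly F}) (d : {poly F}) :
  (forall i, Q i -> d %| f i) -> d %| \sum_(i <- r | Q i) f i.
Proof.
move=> df; apply: (big_ind (fun x => d %| x)); [exact: dvdp0 | exact: dvdp_add | exact: df].
Qed.

Lemma dvdp_congr (F : fieldType) (d a b : {poly F}) :
  d %| a - b -> (d %| a) = (d %| b).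
Proof. by move=> dab; rewrite -[in LHS](subrK b a) dvdp_addr. Qed.

Lemma dvdp_sub_modp (F : fieldType) (d q : {poly F}) : d %| q - q %% d.
Proof. by rewrite {1}(divp_eq q d) addrK dvdp_mull. Qed.

Lemma dvdp_mul_invertible (F : fieldType) (d a b x : {poly F}) :
  (a * b) %% d = 1 -> (d %| b * x) = (d %| x).
Proof.
move=> ab1; apply/idP/idP => [d_bx | d_x]; last exact: dvdp_mull.
have d_ab1 : d %| a * b - 1 by rewrite -[X in _ - X]ab1 dvdp_sub_modp.
rewrite -(dvdp_congr (a := a * (b * x))); first exact: dvdp_mull.
by rewrite mulrA -{2}[x]mul1r -mulrBl dvdp_mulr.
Qed.

Section Numerator.
Variables (F : fieldType) (P : {poly F}).

Definition recurrent (y : nat -> F) : Prop :=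
  forall n : nat, \sum_(k < size P) P`_k * y (k + n)%N = 0.

(* Coefficient of z^m in P(z) G_y(z). *)
Definition numer_coef (y : nat -> F) (m : nat) : F :=
  \sum_(k < size P | (m < k)%N) P`_k * y (k - m - 1)%N.

Definition numer (y : nat -> F) : {poly F} := \poly_(m < (size P).-1) numer_coef y m.

(* Nat-interval form of the coefficients, convenient for index shifts. *)
Lemma numer_coefE y m :
  numer_coef y m = \sum_(m.+1 <= k < size P) P`_k * y (k - m.+1)%N.
Proof.
rewrite /numer_coef big_geq_mkord; apply: eq_bigr => k _; by rewrite -subnDA addn1.
Qed.

Lemma coef_numer y m : (numer y)`_m = numer_coef y m.
Proof.
rewrite coef_poly; case: ifP => // hm.
rewrite numer_coefE big_geq //.
by case: (size P) hm => //= n; rewrite ltnS => /negbT; rewrite -leqNgt.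
Qed.

Lemma eq_numer y1 y2 : y1 =1 y2 -> numer y1 = numer y2.
Proof.
move=> eq_y; apply/polyP => m; rewrite !coef_numer.
by apply: eq_bigr => k _; rewrite eq_y.
Qed.

Lemma numer_sum (I : Type) (r : seq I) (y : I -> nat -> F) :
  numer (fun i => \sum_(x <- r) y x i) = \sum_(x <- r) numer (y x).
Proof.
apply/polyP => m; rewrite coef_numer coef_sum /numer_coef.
under eq_bigr do rewrite mulr_sumr.
by rewrite exchange_big; apply: eq_bigr => x _; rewrite coef_numer.
Qed.

Lemma numerZ (a : F) y : numer (fun i => a * y i) = a *: numer y.
Proof.
apply/polyP => m; rewrite coefZ !coef_numer /numer_coef mulr_sumr.
by apply: eq_bigr => k _; rewrite mulrCA.
Qed.

Lemma recurrent_sum (I : Type) (r : seq I) (y : I -> nat -> F) :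
  (forall x, recurrent (y x)) -> recurrent (fun i => \sum_(x <- r) y x i).
Proof.
move=> rec_y n; under eq_bigr do rewrite mulr_sumr.
by rewrite exchange_big big1 // => x _; exact: rec_y.
Qed.

Lemma recurrentZ (a : F) y : recurrent y -> recurrent (fun i => a * y i).
Proof.
move=> rec_y n; under eq_bigr do rewrite mulrCA.
by rewrite -mulr_sumr rec_y mulr0.
Qed.

Lemma recurrent_shift y j : recurrent y -> recurrent (fun i => y (i + j)%N).
Proof.
move=> rec_y n; rewrite -[RHS](rec_y (n + j)%N).
by apply: eq_bigr => k _; rewrite addnA.
Qed.

Lemma numer_shift1 y : (0 < size P)%N -> recurrent y ->
  numer (fun i => y i.+1) = 'X * numer y - y 0%N *: P.
Proof.
move=> P_gt0 rec_y; apply/polyP => m.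
rewrite coefB coefXM coefZ !coef_numer !numer_coefE.
case: m => [|m] /=.
  have := rec_y 0%N; rewrite -(big_mkord xpredT (fun k => P`_k * y (k + 0)%N)).
  rewrite big_ltn // => /eqP; rewrite addrC addr_eq0 => /eqP rec0.
  rewrite sub0r mulrC -[y 0%N]/(y (0 + 0)%N) -rec0.
  by apply: eq_big_nat => k /andP[k_gt0 _]; congr (_ * y _); lia.
case: (ltnP m.+1 (size P)) => hm.
  rewrite (big_ltn hm) subnn [P`_m.+1 * _]mulrC [y 0%N * _ + _]addrC addrK.
  by apply: eq_big_nat => k /andP[hk _]; congr (_ * y _); lia.
by rewrite !big_geq ?(leq_trans hm) // nth_default // mulr0 subr0.
Qed.

Lemma numer_shift y j : (0 < size P)%N -> recurrent y ->
  P %| numer (fun i => y (i + j)%N) - 'X^j * numer y.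
Proof.
move=> P_gt0 rec_y; elim: j => [|j IH].
  by rewrite expr0 mul1r (@eq_numer _ y) ?subrr ?dvdp0 // => i; rewrite addn0.
rewrite (@eq_numer _ (fun i => y (i.+1 + j)%N)); last by move=> i; rewrite addnS.
rewrite (numer_shift1 P_gt0 (recurrent_shift j rec_y)).
have -> : 'X * numer (fun i => y (i + j)%N) - y (0 + j)%N *: P - 'X^(j.+1) * numer y =
    'X * (numer (fun i => y (i + j)%N) - 'X^j * numer y) - (y (0 + j)%N)%:P * P.
  by rewrite mul_polyC exprS mulrBr mulrA addrAC.
by apply: dvdp_sub; [exact: dvdp_mull | exact: dvdp_mull (dvdpp _)].
Qed.

(* For monic P a recurrent sequence with zero numerator vanishes: by strong
   induction, for i < deg P the coefficient of z^(deg P - i - 1) of N(y)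
   isolates y_i, and for i >= deg P the recurrence does. *)
Lemma numer_eq0_seq0 y : P \is monic -> recurrent y -> numer y = 0 ->
  forall i, y i = 0.
Proof.
move=> P_monic rec_y N0.
have hn m : numer_coef y m = 0 by rewrite -coef_numer N0 coef0.
have P_gt0 : (0 < size P)%N by rewrite size_poly_gt0 monic_neq0.
set d := (size P).-1.
have sizeP : size P = d.+1 by rewrite /d prednK.
have leadP : P`_d = 1 by move/monicP: P_monic; rewrite lead_coefE.
elim/ltn_ind => i IH; case: (ltnP i d) => hid.
  have := hn (d - i.+1)%N; rewrite numer_coefE sizeP big_nat_recr /=; last lia.
  rewrite big_nat_cond big1 ?add0r.
    by rewrite leadP mul1r; have -> : (d - (d - i.+1).+1 = i)%N by lia.
  by move=> k /andP[/andP[k1 k2] _]; rewrite IH ?mulr0 //; lia.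
have := rec_y (i - d)%N; rewrite sizeP big_ord_recr /= leadP mul1r big1 ?add0r.
  by have -> : (d + (i - d) = i)%N by lia.
by move=> k _; rewrite IH ?mulr0 //; have := ltn_ord k; lia.
Qed.

(* N(y) is reduced modulo P, so P | N(y) forces N(y) = 0. *)
Lemma dvdp_numer_eq0 y : (0 < size P)%N -> P %| numer y -> numer y = 0.
Proof.
move=> P_gt0 /modp_eq0; rewrite modp_small //.
by apply: leq_ltn_trans (size_poly _ _) _; rewrite prednK.
Qed.

Lemma seq_eq0_iff_dvdp_numer y : P \is monic -> recurrent y ->
  (forall i, y i = 0) <-> P %| numer y.
Proof.
move=> P_monic rec_y; have P_gt0 : (0 < size P)%N by rewrite size_poly_gt0 monic_neq0.
split=> [y0 | /(dvdp_numer_eq0 P_gt0)]; last exact: numer_eq0_seq0.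
suff -> : numer y = 0 by exact: dvdp0.
apply/polyP => m; rewrite coef_numer coef0 /numer_coef big1 // => k _.
by rewrite y0 mulr0.
Qed.

End Numerator.

Section Relation.
Variables (F : fieldType) (P : {poly F}) (v k : nat).
Variables (Y : 'I_v -> nat -> F) (wt : 'I_k -> 'I_v -> F).
Hypothesis rec_Y : forall l, recurrent P (Y l).

Definition relation_seq (i : nat) : F := \sum_(l < v) \sum_(j < k) wt j l * Y l (i + j)%N.

Definition weight_poly (l : 'I_v) : {poly F} := \sum_(j < k) wt j l *: 'X^j.

Lemma recurrent_relation_seq : recurrent P relation_seq.
Proof.
apply: recurrent_sum => l; apply: recurrent_sum => j.
exact/recurrentZ/recurrent_shift.
Qed.

Lemma numer_relation_seq : (0 < size P)%N ->
  P %| numer P relation_seq - \sum_(l < v) weight_poly l * numer P (Y l).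
Proof.
move=> P_gt0; rewrite /relation_seq numer_sum -sumrB; apply: dvdp_bigsum => l _.
rewrite (numer_sum P _ (fun j i => wt j l * Y l (i + j)%N)) /weight_poly mulr_suml -sumrB.
apply: dvdp_bigsum => j _; rewrite numerZ -scalerAl -scalerBr -mul_polyC.
exact/dvdp_mull/numer_shift.
Qed.

Lemma relation_seq_eq0_iff : P \is monic ->
  (forall i, relation_seq i = 0) <-> P %| \sum_(l < v) weight_poly l * numer P (Y l).
Proof.
move=> P_monic; have P_gt0 : (0 < size P)%N by rewrite size_poly_gt0 monic_neq0.
apply: (iff_trans (seq_eq0_iff_dvdp_numer P_monic recurrent_relation_seq)).
by rewrite (dvdp_congr (numer_relation_seq P_gt0)).
Qed.

End Relation.

Section DualLattice.
Variables (F : fieldType) (P : {poly F}) (v : nat) (hbar : 'I_v -> {poly F}).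
Variables (l0 : 'I_v) (W : 'I_v -> {poly F}).
Hypothesis l0_first : val l0 = 0%N.

Lemma dual_gen_comb_first c :
  \sum_(l < v) c l * dual_gen P hbar l l0 = c l0 * P - \sum_(l < v | l != l0) c l * hbar l.
Proof.
rewrite (bigD1 l0) //= /dual_gen l0_first eqxx /=.
congr (_ + _); rewrite -sumrN; apply: eq_bigr => l l_neq.
have -> : (val l == 0%N) = false.
  by apply/negbTE; move: l_neq; rewrite -l0_first; apply: contra => /eqP/val_inj ->.
by rewrite mulrN.
Qed.

Lemma dual_gen_comb_other c j : j != l0 -> \sum_(l < v) c l * dual_gen P hbar l j = c j.
Proof.
move=> j_neq; have j_gt0 : val j != 0%N.
  by move: j_neq; rewrite -l0_first; apply: contra => /eqP/val_inj ->.
rewrite (bigD1 j) //= /dual_gen (negbTE j_gt0) eqxx mulr1.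
rewrite big1 ?addr0 // => l l_neq.
by case: ifP => _; rewrite ?mulr0 // eq_sym (negbTE l_neq) mulr0.
Qed.

Lemma in_dual_latticeP :
  in_dual_lattice P hbar W <-> P %| W l0 + \sum_(l < v | l != l0) W l * hbar l.
Proof.
split=> [[c Wc] | dvdW].
  have Wl l : l != l0 -> W l = c l by move=> ?; rewrite Wc dual_gen_comb_other.
  rewrite (eq_bigr (fun l => c l * hbar l)); last by move=> l /Wl ->.
  by rewrite Wc dual_gen_comb_first subrK dvdp_mull.
exists (fun l => if l == l0 then (W l0 + \sum_(l < v | l != l0) W l * hbar l) %/ P
                 else W l) => j.
case: (eqVneq j l0) => [->|j_neq]; last by rewrite dual_gen_comb_other // (negbTE j_neq).
rewrite dual_gen_comb_first eqxx divpK //.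
rewrite [X in _ - X](eq_bigr (fun l => W l * hbar l)) ?addrK //.
by move=> l /negbTE ->.
Qed.

End DualLattice.

Lemma in_dual_lattice_dvdp (F : fieldType) (P : {poly F}) (v : nat) (l0 : 'I_v)
    (l0_first : val l0 = 0%N) (H W : 'I_v -> {poly F}) (h0inv : {poly F})
    (hinv : (h0inv * H l0) %% P = 1) :
  in_dual_lattice P (fun l => (h0inv * H l) %% P) W <-> P %| \sum_(l < v) W l * H l.
Proof.
set hbar := fun l => (h0inv * H l) %% P.
have hbar_H l : P %| H l - H l0 * hbar l.
  have -> : H l - H l0 * hbar l =
      H l0 * (h0inv * H l - hbar l) - H l * (h0inv * H l0 - 1) by ring.
  apply: dvdp_sub; apply: dvdp_mull; first exact: dvdp_sub_modp.
  by rewrite -[X in _ - X]hinv dvdp_sub_modp.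
rewrite (in_dual_latticeP _ _ _ l0_first) -(dvdp_mul_invertible _ hinv).
rewrite (dvdp_congr (b := \sum_(l < v) W l * H l)) //.
rewrite [X in _ - X](bigD1 l0) //= mulrDr mulr_sumr opprD addrACA [W l0 * _]mulrC.
rewrite subrr add0r -sumrB; apply: dvdp_bigsum => l _.
by rewrite mulrCA -mulrBr dvdp_mull // -dvdpNr opprB.
Qed.

Theorem proposition1 (p w v : nat) (hp : (0 < p)%N) (hv1 : (1 <= v)%N) (hvw : (v <= w)%N)
  (A : 'M['F_2]_p) (B : 'M['F_2]_(w, p)) (x0 : 'cV['F_2]_p) (hx0 : x0 != 0)
  (hirr : irreducible_poly (char_poly A))
  (h : 'I_w -> {poly 'F_2})
  (hrat : forall l : 'I_w, rational_form (fun i => yout A B x0 i l) (h l) (char_poly A))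
  (i0 : 'I_w) (hi0 : val i0 = 0%N) (hh0 : h i0 != 0)
  (h0inv : {poly 'F_2}) (hinv : (h0inv * h i0) %% char_poly A = 1)
  (k : nat) (hk : (1 <= k)%N) (wt : 'I_k -> 'I_v -> 'F_2) :
  (forall i : nat,
     \sum_(l < v) \sum_(j < k) wt j l * yout A B x0 (i + j)%N (widen_ord hvw l) = 0)
  <->
  in_dual_lattice (char_poly A)
    (fun l : 'I_v => (h0inv * h (widen_ord hvw l)) %% char_poly A)
    (fun l : 'I_v => \sum_(j < k) wt j l *: 'X^j).
Proof.
set P := char_poly A.
set Y := fun (l : 'I_v) i => yout A B x0 i (widen_ord hvw l).
pose l0 : 'I_v := Ordinal hv1.
have l0_i0 : widen_ord hvw l0 = i0 by apply: val_inj; rewrite /= hi0.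
have rec_Y l : recurrent P (Y l) by case: (hrat (widen_ord hvw l)).
(* The rational form identifies h_l with the numerator N(Y_l). *)
have h_numer l : h (widen_ord hvw l) = numer P (Y l).
  apply/polyP => m; rewrite coef_numer.
  by case: (hrat (widen_ord hvw l)) => _ _ <-.
rewrite (in_dual_lattice_dvdp (l0 := l0)) /= ?l0_i0 //.
under eq_bigr do rewrite h_numer.
exact: (relation_seq_eq0_iff wt rec_Y (char_poly_monic A)).
Qed.
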